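(* $\rhd_{R_{\diamond}}\,=\,\rhd_{\diamond}$ with $R_{\diamond}\,=\,\Bigl\{ \frac{p\, , \, q}{p\diamond q}\,,\, \frac{p\diamond q}{p\, , \, q}\Bigr\}$.
   Context: $\rhd_\diamond$ is the multiple-conclusion (Scottian) logic of the two-valued Nmatrix $\langle\{0,1\},\cdot,\{1\}\rangle$ with one binary connective $\diamond$ (platypus) interpreted by $\diamond(0,0)=\{0\}$, $\diamond(1,1)=\{1\}$, $\diamond(0,1)=\diamond(1,0)=\{0,1\}$: $\Gamma\rhd_\diamond\Delta$ iff every valuation making all of $\Gamma$ equal to $1$ makes some member of $\Delta$ equal to $1$. For a set $R$ of multiple-conclusion rules $\frac{\Gamma}{\Delta}$ (premises read conjunctively, conclusions disjunctively), $\rhd_R$ is the closure of $R$ under overlap, dilution, cut and substitution invariance. *)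

From Stdlib Require Import List.
Import ListNotations.

Inductive form : Type :=
| Var : nat -> form
| Dia : form -> form -> form.

Definition fset := form -> Prop.

Definition fset_of_list (l : list form) : fset := fun phi => In phi l.

Definition subst := nat -> form.

Fixpoint apply_subst (s : subst) (phi : form) : form :=
  match phi with
  | Var n => s n
  | Dia a b => Dia (apply_subst s a) (apply_subst s b)
  end.

Definition subst_set (s : subst) (G : fset) : fset :=
  fun psi => exists phi, G phi /\ psi = apply_subst s phi.

Record rule := mkRule { prem : list form; concl : list form }.

(* The Scottian (multiple-conclusion) consequence relation |>_R generated by R:
   the least relation containing R that is closed under overlap, dilution,
   (generalized, Shoesmith-Smiley) cut and substitution invariance. *)
Inductive derivR (R : list rule) : fset -> fset -> Prop :=
| dR_rule : forall r, In r R ->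
    derivR R (fset_of_list (prem r)) (fset_of_list (concl r))
| dR_overlap : forall (G D : fset) phi, G phi -> D phi -> derivR R G D
| dR_dilution : forall (G D G' D' : fset),
    derivR R G D ->
    (forall phi, G phi -> G' phi) -> (forall phi, D phi -> D' phi) ->
    derivR R G' D'
| dR_cut : forall (G D Om : fset),
    (forall Om1 Om2 : fset,
        (forall phi, Om phi <-> (Om1 phi \/ Om2 phi)) ->
        (forall phi, ~ (Om1 phi /\ Om2 phi)) ->
        derivR R (fun phi => G phi \/ Om1 phi) (fun phi => D phi \/ Om2 phi)) ->
    derivR R G D
| dR_subst : forall (s : subst) (G D : fset),
    derivR R G D -> derivR R (subst_set s G) (subst_set s D).

(* The two-valued Nmatrix <{0,1}, ., {1}> with 0 = false, 1 = true:
   diamond(0,0) = {0}, diamond(1,1) = {1}, diamond(0,1) = diamond(1,0) = {0,1}.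
   [dia_interp x y z] means z is in diamond(x,y). *)
Definition dia_interp (x y z : bool) : Prop :=
  match x, y with
  | false, false => z = false
  | true, true => z = true
  | _, _ => True
  end.

Definition valuation (v : form -> bool) : Prop :=
  forall a b, dia_interp (v a) (v b) (v (Dia a b)).

Definition sem_dia (G D : fset) : Prop :=
  forall v, valuation v ->
    (forall phi, G phi -> v phi = true) ->
    exists psi, D psi /\ v psi = true.

Definition p_var := Var 0.
Definition q_var := Var 1.
Definition R_dia : list rule :=
  [ mkRule [p_var; q_var] [Dia p_var q_var];
    mkRule [Dia p_var q_var] [p_var; q_var] ].

(* Soundness: every closure condition preserves semantic consequence; a cut
   is sound because the valuation at hand splits the cut set into its true and
   false parts, and substitution invariance because a valuation composed with a
   substitution is again a valuation.
   Completeness: cutting on the set of all formulas reduces the goal to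
   G, {v = 1} |> D, {v = 0} for every map v : form -> bool.  If v is a
   valuation this holds by overlap, as v either refutes a premise or makes a
   conclusion true.  Otherwise v breaks the table of the platypus at some
   Dia a b, with v a = v b = 1 and v (Dia a b) = 0 or with v a = v b = 0 and
   v (Dia a b) = 1, and these are instances of the two rules of R_dia. *)
From Stdlib Require Import List Classical ClassicalEpsilon.
Import ListNotations.

Lemma valuation_subst (v : form -> bool) (s : subst) :
  valuation v -> valuation (fun phi => v (apply_subst s phi)).
Proof. intros Hv a b. exact (Hv (apply_subst s a) (apply_subst s b)). Qed.

Lemma sem_dia_R_dia_rule (r : rule) :
  In r R_dia -> sem_dia (fset_of_list (prem r)) (fset_of_list (concl r)).
Proof.
  intros Hr v Hv Hprem.
  pose proof (Hv p_var q_var) as Hpq.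
  destruct Hr as [<- | [<- | []]]; cbn in *.
  - rewrite (Hprem p_var (or_introl eq_refl)),
            (Hprem q_var (or_intror (or_introl eq_refl))) in Hpq.
    exists (Dia p_var q_var). split; [left |]; auto.
  - rewrite (Hprem _ (or_introl eq_refl)) in Hpq.
    destruct (v p_var) eqn:Hp; [exists p_var; split; [left |]; auto |].
    destruct (v q_var) eqn:Hq; [exists q_var; split; [right; left |]; auto |].
    discriminate.
Qed.

Lemma sem_dia_dilution (G D G' D' : fset) :
  sem_dia G D -> (forall phi, G phi -> G' phi) -> (forall phi, D phi -> D' phi) ->
  sem_dia G' D'.
Proof.
  intros Hsem HG HD v Hv HG'.
  destruct (Hsem v Hv (fun phi H => HG' phi (HG phi H))) as [psi [Hpsi Hv_psi]].
  exists psi; auto.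
Qed.

Lemma sem_dia_cut (G D Om : fset) :
  (forall Om1 Om2 : fset,
      (forall phi, Om phi <-> (Om1 phi \/ Om2 phi)) ->
      (forall phi, ~ (Om1 phi /\ Om2 phi)) ->
      sem_dia (fun phi => G phi \/ Om1 phi) (fun phi => D phi \/ Om2 phi)) ->
  sem_dia G D.
Proof.
  intros Hcut v Hv HG.
  destruct (Hcut (fun phi => Om phi /\ v phi = true)
                 (fun phi => Om phi /\ v phi = false))
    with (v := v) as [psi [[HD | [_ Hfalse]] Htrue]].
  - intro phi; destruct (v phi); intuition congruence.
  - intros phi [[_ H1] [_ H2]]; congruence.
  - exact Hv.
  - intros phi [H | [_ H]]; auto.
  - exists psi; auto.
  - congruence.
Qed.

Lemma sem_dia_subst (s : subst) (G D : fset) :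
  sem_dia G D -> sem_dia (subst_set s G) (subst_set s D).
Proof.
  intros Hsem v Hv HG.
  destruct (Hsem _ (valuation_subst v s Hv)) as [psi [Hpsi Hv_psi]].
  - intros phi Hphi. apply HG. exists phi; auto.
  - exists (apply_subst s psi). split; [exists psi |]; auto.
Qed.

Lemma derivR_R_dia_sound (G D : fset) : derivR R_dia G D -> sem_dia G D.
Proof.
  induction 1.
  - apply sem_dia_R_dia_rule; assumption.
  - intros v _ HG. exists phi; auto.
  - eapply sem_dia_dilution; eassumption.
  - eapply sem_dia_cut; eassumption.
  - apply sem_dia_subst; assumption.
Qed.

Lemma derivR_rule_instance (R : list rule) (r : rule) (s : subst) (G D : fset) :
  In r R ->
  (forall phi, In phi (prem r) -> G (apply_subst s phi)) ->
  (forall phi, In phi (concl r) -> D (apply_subst s phi)) ->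
  derivR R G D.
Proof.
  intros Hr HG HD.
  apply dR_dilution with (subst_set s (fset_of_list (prem r)))
                         (subst_set s (fset_of_list (concl r))).
  - apply dR_subst, dR_rule, Hr.
  - intros phi [psi [Hpsi ->]]; auto.
  - intros phi [psi [Hpsi ->]]; auto.
Qed.

Lemma derivR_cut_bivalent (R : list rule) (G D : fset) :
  (forall v : form -> bool,
      derivR R (fun phi => G phi \/ v phi = true) (fun phi => D phi \/ v phi = false)) ->
  derivR R G D.
Proof.
  intros Hv.
  apply dR_cut with (Om := fun _ => True).
  intros Om1 Om2 Hpart _.
  set (v := fun phi => if excluded_middle_informative (Om1 phi) then true else false).
  assert (Hv_true : forall phi, v phi = true -> Om1 phi).
  { intros phi; subst v; cbn.
    destruct (excluded_middle_informative (Om1 phi)); easy. }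
  assert (Hv_false : forall phi, v phi = false -> Om2 phi).
  { intros phi; subst v; cbn.
    destruct (excluded_middle_informative (Om1 phi)); [easy |].
    destruct (proj1 (Hpart phi) I); tauto. }
  apply dR_dilution with (fun phi => G phi \/ v phi = true)
                         (fun phi => D phi \/ v phi = false).
  - apply Hv.
  - intros phi [H | H]; auto.
  - intros phi [H | H]; auto.
Qed.

Definition subst2 (a b : form) : subst :=
  fun n => match n with 0 => a | _ => b end.

Lemma derivR_R_dia_intro (G D : fset) (a b : form) :
  G a -> G b -> D (Dia a b) -> derivR R_dia G D.
Proof.
  intros Ha Hb Hab.
  apply (derivR_rule_instance R_dia (mkRule [p_var; q_var] [Dia p_var q_var])
                              (subst2 a b)); [left; reflexivity | |]; cbn.
  - intros phi [<- | [<- | []]]; assumption.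
  - intros phi [<- | []]; assumption.
Qed.

Lemma derivR_R_dia_elim (G D : fset) (a b : form) :
  G (Dia a b) -> D a -> D b -> derivR R_dia G D.
Proof.
  intros Hab Ha Hb.
  apply (derivR_rule_instance R_dia (mkRule [Dia p_var q_var] [p_var; q_var])
                              (subst2 a b)); [right; left; reflexivity | |]; cbn.
  - intros phi [<- | []]; assumption.
  - intros phi [<- | [<- | []]]; assumption.
Qed.

Lemma not_valuation_witness (v : form -> bool) :
  ~ valuation v ->
  exists a b,
    (v a = true /\ v b = true /\ v (Dia a b) = false) \/
    (v a = false /\ v b = false /\ v (Dia a b) = true).
Proof.
  intros Hnv.
  apply not_all_ex_not in Hnv as [a Hnv].
  apply not_all_ex_not in Hnv as [b Hnv].
  exists a, b; unfold dia_interp in Hnv.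
  destruct (v a), (v b), (v (Dia a b)); tauto.
Qed.

Lemma derivR_R_dia_bivalent (G D : fset) (v : form -> bool) :
  sem_dia G D ->
  derivR R_dia (fun phi => G phi \/ v phi = true) (fun phi => D phi \/ v phi = false).
Proof.
  intros Hsem.
  destruct (classic (valuation v)) as [Hv | Hnv].
  - destruct (classic (forall phi, G phi -> v phi = true)) as [HG | HG].
    + destruct (Hsem v Hv HG) as [psi [Hpsi Htrue]].
      apply dR_overlap with psi; auto.
    + apply not_all_ex_not in HG as [phi Hphi].
      apply imply_to_and in Hphi as [Hphi Hfalse].
      apply dR_overlap with phi; [left | right]; auto.
      destruct (v phi); congruence.
  - destruct (not_valuation_witness v Hnv) as [a [b [[Ha [Hb Hab]] | [Ha [Hb Hab]]]]].
    + apply derivR_R_dia_intro with a b; auto.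
    + apply derivR_R_dia_elim with a b; auto.
Qed.

Theorem theorem3 : forall G D : fset, derivR R_dia G D <-> sem_dia G D.
Proof.
  intros G D; split.
  - apply derivR_R_dia_sound.
  - intros Hsem. apply derivR_cut_bivalent. intros v.
    apply derivR_R_dia_bivalent, Hsem.
Qed.
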